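(* A \textsc{2-Visits} instance $d_1\le\dots\le d_n$ in which at most two distinct numbers occur can be solved (i.e., it can be decided whether a feasible schedule exists) in $O(n)$ time.
   Context: \textsc{2-Visits}: given a non-decreasing sequence of $n$ positive integers (deadlines) $d_1\le \dots\le d_n$, decide whether there exists a schedule of length $2n$ (an assignment of one visit to each position $1,\dots,2n$) containing exactly two visits of each node $i\in[n]$, such that the first visit of $i$ is at position at most $d_i$ and the second visit of $i$ is at most $d_i$ positions after the first visit of $i$. *)

From mathcomp Require Import all_boot.
Set Implicit Arguments. Unset Strict Implicit. Unset Printing Implicit Defensive.

(* Instance: a sequence d = [d_1; ...; d_n] of deadlines (node i, 0-indexed,
   has deadline nth 0 d i).  A schedule is a sequence s of length 2n (position
   p, 0-indexed, is position p+1 of the paper) whose entries are nodes in [0,n),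
   each node occurring exactly twice. *)
Definition is_schedule (n : nat) (s : seq nat) : Prop :=
  size s = 2 * n /\ all (fun x => x < n) s /\ forall i, i < n -> count_mem i s = 2.

Definition feasible_schedule (d : seq nat) (s : seq nat) : Prop :=
  is_schedule (size d) s /\
  forall i, i < size d ->
    exists p q, [/\ p < q < size s, nth 0 s p = i, nth 0 s q = i,
                    p.+1 <= nth 0 d i & q - p <= nth 0 d i].

Definition two_visits_instance (d : seq nat) : Prop :=
  sorted leq d /\ all (fun x => 0 < x) d.

Definition two_visits_yes (d : seq nat) : Prop :=
  exists s, feasible_schedule d s.

(* Registers hold natural numbers; the input d is a read-only array with
   unit-cost random access; arithmetic is +, truncated -, and comparisons
   (no multiplication/division, so unit cost is not abusable). *)
Inductive expr : Type :=
| EConst of nat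
| EReg of nat
| ELen
| EInput of expr
| EAdd of expr & expr
| ESub of expr & expr       (* truncated subtraction *)
| ELt of expr & expr
| EEq of expr & expr.

Inductive cmd : Type :=
| CSkip
| CAssign of nat & expr
| CSeq of cmd & cmd
| CIf of expr & cmd & cmd
| CWhile of expr & cmd.

Definition state := nat -> nat.
Definition init_state : state := fun _ => 0.
Definition upd (st : state) (r v : nat) : state :=
  fun x => if x == r then v else st x.

Fixpoint eval (d : seq nat) (st : state) (e : expr) : nat :=
  match e with
  | EConst k => k
  | EReg r => st r
  | ELen => size d
  | EInput e1 => nth 0 d (eval d st e1)
  | EAdd e1 e2 => eval d st e1 + eval d st e2
  | ESub e1 e2 => eval d st e1 - eval d st e2
  | ELt e1 e2 => nat_of_bool (eval d st e1 < eval d st e2)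
  | EEq e1 e2 => nat_of_bool (eval d st e1 == eval d st e2)
  end.

Inductive exec (d : seq nat) : cmd -> state -> state -> nat -> Prop :=
| XSkip st : exec d CSkip st st 1
| XAssign st r e : exec d (CAssign r e) st (upd st r (eval d st e)) 1
| XSeq c1 c2 st st1 st2 t1 t2 :
    exec d c1 st st1 t1 -> exec d c2 st1 st2 t2 ->
    exec d (CSeq c1 c2) st st2 (t1 + t2)
| XIfT e c1 c2 st st' t :
    eval d st e != 0 -> exec d c1 st st' t -> exec d (CIf e c1 c2) st st' t.+1
| XIfF e c1 c2 st st' t :
    eval d st e = 0 -> exec d c2 st st' t -> exec d (CIf e c1 c2) st st' t.+1
| XWhileF e c st :
    eval d st e = 0 -> exec d (CWhile e c) st st 1
| XWhileT e c st st1 st2 t1 t2 :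
    eval d st e != 0 -> exec d c st st1 t1 -> exec d (CWhile e c) st1 st2 t2 ->
    exec d (CWhile e c) st st2 (t1 + t2).+1.

Definition decides_within (P : cmd) (c : nat) (d : seq nat) (Q : Prop) : Prop :=
  exists st t, [/\ exec d P init_state st t, t <= c * (size d).+1 &
                   (st 0 != 0 <-> Q)].

From mathcomp Require Import all_boot zify.
Set Implicit Arguments. Unset Strict Implicit. Unset Printing Implicit Defensive.

(* Let a <= b be the two deadlines, n the number of nodes and k the number of
   nodes with deadline a.  If n <= a, visit every node at i and n + i; if a < k
   or b < n, too many nodes must be visited before a, resp. b.  Otherwise let
   x = b - n and w = b - a.  All n first visits happen before position b, so
   exactly x second visits do; call the other nodes late.  At least k - x
   a-nodes are late, and their first visits lie in [w, a).  A window [t, t + w)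
   with t <= b holds at most 2x first visits of late a-nodes: their second
   visits and those of the late nodes first visited before t are distinct
   positions of [b, b + t), while at least t - 2x late nodes are first visited
   before t.  Summing over consecutive windows gives
   k - x <= #{p in [w, a) | p mod w < 2x}.  Conversely, when this holds (and,
   replacing x by n - a if needed, 2x <= w), the a-nodes are visited x of them
   at i and x + i, the others at the first k - x such positions p and at p + a,
   and the b-nodes fill the free positions in order; the window bound keeps
   their gaps at most n + x = b.  The count takes one pass over [0, a), so the
   test runs in linear time on the RAM. *)

Lemma count_iota_lt t N : count (fun i => i < t) (iota 0 N) = minn t N.
Proof.
elim: N => [|N IH]; first by rewrite minn0.
by rewrite -addn1 iotaD count_cat IH /= add0n addn0; case: (ltnP N t); lia.
Qed.

Lemma sub_in_count (T : eqType) (a1 a2 : pred T) (s : seq T) :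
  {in s, subpred a1 a2} -> count a1 s <= count a2 s.
Proof.
move=> sub12; rewrite -(@eq_in_count _ (predI a1 (mem s))) => [|z zs]; last by rewrite /= zs andbT.
by apply: sub_count => z /andP[a1z zs]; apply: sub12.
Qed.

Lemma count_predU_le (T : Type) (a1 a2 : pred T) (s : seq T) :
  count (predU a1 a2) s <= count a1 s + count a2 s.
Proof. by rewrite -count_predUI leq_addr. Qed.

Lemma count_predU_disjoint (T : Type) (a1 a2 : pred T) (s : seq T) :
  (forall z, a1 z -> ~~ a2 z) -> count (predU a1 a2) s = count a1 s + count a2 s.
Proof.
move=> disj; rewrite -count_predUI (@eq_count _ (predI a1 a2) pred0) ?count_pred0 ?addn0 //.
by move=> z /=; case a1z: (a1 z) => //=; apply/negbTE/disj.
Qed.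

Lemma count_mem_sym (T : eqType) (u v : seq T) :
  uniq u -> uniq v -> count (mem u) v = count (mem v) u.
Proof.
move=> uu uv; rewrite -!size_filter; apply/perm_size/uniq_perm; rewrite ?filter_uniq //.
by move=> z; rewrite !mem_filter andbC.
Qed.

Lemma count_nth_iota (p : pred nat) (d : seq nat) :
  count (fun i => p (nth 0 d i)) (iota 0 (size d)) = count p d.
Proof. by rewrite -[in RHS](mkseq_nth 0 d) count_map. Qed.

Lemma count_le_of_inj (T : eqType) (s : seq T) (f : T -> nat) (a : pred T) lo len :
  uniq (map f s) -> (forall z, z \in s -> a z -> lo <= f z < lo + len) ->
  count a s <= len.
Proof.
move=> uf range; rewrite -size_filter -(size_map f) -[len](size_iota lo).
apply: uniq_leq_size.
  by apply: subseq_uniq uf; apply/map_subseq/filter_subseq.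
move=> y /mapP[z]; rewrite mem_filter => /andP[az zs] ->.
by rewrite mem_iota; apply: range.
Qed.

Lemma exists_count_prefix (a : pred nat) N K : K <= count a (iota 0 N) ->
  exists2 T, T <= N & count a (iota 0 T) = K.
Proof.
elim: N => [|N IH] le_K; first by exists 0; move: le_K => /=; lia.
have [le_KN | lt_NK] := leqP K (count a (iota 0 N)).
  by have [T le_TN <-] := IH le_KN; exists T => //; lia.
by exists N.+1 => //; move: le_K lt_NK; rewrite -addn1 iotaD count_cat /=; lia.
Qed.

Lemma filter_iota_eq (a : pred nat) lo N lo' N' :
  (forall i, a i -> (lo <= i < lo + N) = (lo' <= i < lo' + N')) ->
  filter a (iota lo N) = filter a (iota lo' N').
Proof.
move=> same; apply: (irr_sorted_eq ltn_trans ltnn);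
  try exact: (sorted_filter ltn_trans _ (iota_ltn_sorted _ _)).
by move=> i; rewrite !mem_filter !mem_iota; case ai: (a i) => //=; apply: same.
Qed.

Lemma nth_filter_iota (a : pred nat) lo N j : j < count a (iota lo N) ->
  let q := nth 0 (filter a (iota lo N)) j in
  [/\ lo <= q < lo + N, a q & count a (iota lo (q - lo)) = j].
Proof.
elim: N j => [|N IH] j; first by [].
rewrite -[N.+1]addn1 iotaD count_cat filter_cat /= addn0 nth_cat size_filter.
move=> lt_j; case: (ltnP j (count a (iota lo N))) => [lt_jN | le_jN].
  by have [? ? ?] := IH j lt_jN; split => //; lia.
case: ifP lt_j => aN /= lt_j; last lia.
have -> : j = count a (iota lo N) by lia.
by rewrite subnn /= aN addKn; split => //; lia.
Qed.

Lemma nth_filter_iota_lt (a : pred nat) lo N t j : j < count a (iota lo t) ->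
  nth 0 (filter a (iota lo N)) j < lo + t.
Proof.
move=> lt_j; have [le_tN | lt_Nt] := leqP t N.
  rewrite -(subnKC le_tN) iotaD filter_cat nth_cat size_filter lt_j.
  by have [/andP[_ ->] _ _] := nth_filter_iota lt_j.
case: (ltnP j (count a (iota lo N))) => [lt_jN | le_jN].
  by have [/andP[_ ?] _ _] := nth_filter_iota lt_jN; lia.
by rewrite nth_default ?size_filter //; lia.
Qed.

Definition pattern (w y : nat) : pred nat := fun p => (w <= p) && (p %% w < y).

Lemma count_mod_window w y t : 0 < w ->
  count (fun p => p %% w < y) (iota t w) = minn y w.
Proof.
move=> w_gt0; elim: t => [|t IH].
  rewrite -count_iota_lt; apply: eq_in_count => p; rewrite mem_iota => /andP[_ lt_pw].
  by rewrite modn_small.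
have -> : iota t.+1 w = iota t.+1 w.-1 ++ [:: t + w].
  by rewrite -addn1 -{1}(prednK w_gt0) -(addn1 w.-1) iotaD; congr (_ ++ [:: _]); lia.
by move: IH; rewrite -(prednK w_gt0) /= count_cat /= addn0 modnDr; lia.
Qed.

Lemma count_mod_shift w y L :
  count (fun p => p %% w < y) (iota w L) = count (fun p => p %% w < y) (iota 0 L).
Proof.
rewrite (_ : iota w L = map (addn w) (iota 0 L)) ?count_map -?iotaDl ?addn0 //.
by apply: eq_count => p /=; rewrite modnDl.
Qed.

Lemma count_pattern w y a :
  count (pattern w y) (iota 0 a) = count (fun p => p %% w < y) (iota 0 (a - w)).
Proof.
have [le_aw | lt_wa] := leqP a w.
  rewrite (_ : a - w = 0) /=; last lia.
  rewrite (@eq_in_count _ _ pred0) ?count_pred0 // => p.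
  by rewrite mem_iota /pattern => /andP[_ lt_pa]; apply/negbTE; lia.
rewrite -(subnKC (ltnW lt_wa)) iotaD count_cat addKn -count_mod_shift.
rewrite (@eq_in_count _ _ pred0 (iota 0 w)) ?count_pred0; last first.
  by move=> p; rewrite mem_iota /pattern => /andP[_ lt_pw] /=; case: leqP => //=; lia.
by rewrite add0n; apply: eq_in_count => p; rewrite mem_iota /pattern => /andP[-> _].
Qed.

Lemma count_le_mod_count (S : pred nat) w y lo L : 0 < w ->
  (forall t, t <= lo + L -> count S (iota t w) <= y) ->
  count S (iota lo L) <= count (fun p => p %% w < y) (iota 0 L).
Proof.
move=> w_gt0; elim/ltn_ind: L lo => L IH lo window.
have size_bound t l : count S (iota t l) <= l by rewrite -{2}[l](size_iota t) count_size.
have [le_Lw | lt_wL] := leqP L w.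
  have -> : count (fun p => p %% w < y) (iota 0 L) = minn y L.
    rewrite -count_iota_lt; apply: eq_in_count => p; rewrite mem_iota => /andP[_ lt_pL].
    by rewrite modn_small //; lia.
  rewrite leq_min size_bound andbT; apply: leq_trans (window lo (leq_addr _ _)).
  by rewrite -(subnKC le_Lw) iotaD count_cat leq_addr.
rewrite -(subnKC (ltnW lt_wL)) !iotaD !count_cat add0n count_mod_shift count_mod_window //.
apply: leq_add; first by rewrite leq_min window ?leq_addr ?size_bound.
by apply: IH => [|t]; [lia | have := window t; lia].
Qed.

Lemma bounded_choice (T : Type) (x0 : T) (R : nat -> T -> Prop) n :
  (forall i, i < n -> exists x, R i x) -> exists f : nat -> T, forall i, i < n -> R i (f i).
Proof.
elim: n => [|n IH] exR; first by exists (fun=> x0).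
have [f Rf] := IH (fun i lt_in => exR i (ltnW lt_in)).
have [x Rx] := exR n (ltnSn n).
exists (fun i => if i == n then x else f i) => i; rewrite ltnS leq_eqVlt.
by case: eqP => [-> | _ /= /Rf].
Qed.

Definition visits n (P Q : nat -> nat) : seq nat := map P (iota 0 n) ++ map Q (iota 0 n).

Definition visit_times (d : seq nat) (P Q : nat -> nat) : Prop :=
  perm_eq (visits (size d) P Q) (iota 0 (2 * size d)) /\
  forall i, i < size d -> [/\ P i < Q i, P i < nth 0 d i & Q i - P i <= nth 0 d i].

Lemma visit_times_of_schedule d s :
  feasible_schedule d s -> exists P Q, visit_times d P Q.
Proof.
case=> [[size_s _] feasible]; set n := size d in size_s feasible *.
pose visits_of i (pq : nat * nat) := [/\ pq.1 < pq.2 < size s, nth 0 s pq.1 = i,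
  nth 0 s pq.2 = i, pq.1.+1 <= nth 0 d i & pq.2 - pq.1 <= nth 0 d i].
have [PQ PQ_spec] : exists PQ, forall i, i < n -> visits_of i (PQ i).
  by apply: (bounded_choice (0, 0)) => i /feasible[p [q spec]]; exists (p, q).
set P := fun i => (PQ i).1; set Q := fun i => (PQ i).2.
exists P, Q; split; last by move=> i /PQ_spec[/andP[? _] _ _ ? ?].
have node_P : {in iota 0 n, cancel P (nth 0 s)}.
  by move=> i; rewrite mem_iota => /andP[_ /PQ_spec[]].
have node_Q : {in iota 0 n, cancel Q (nth 0 s)}.
  by move=> i; rewrite mem_iota => /andP[_ /PQ_spec[]].
have uniq_V : uniq (visits n P Q).
  rewrite cat_uniq (map_inj_in_uniq (can_in_inj node_P)) (map_inj_in_uniq (can_in_inj node_Q)).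
  rewrite iota_uniq andbT /=.
  apply/hasPn => _ /mapP[i iI ->]; apply/mapP => -[j jI eq_QP].
  have eq_ij : i = j by rewrite -(node_Q i iI) eq_QP node_P.
  move: iI eq_QP; rewrite mem_iota -eq_ij => /andP[_ /PQ_spec[/andP[lt_PQ _] _ _ _ _]].
  by rewrite /P /Q => eq_QP; move: lt_PQ; rewrite eq_QP ltnn.
apply: uniq_perm; rewrite ?iota_uniq //.
apply: (uniq_min_size uniq_V _ _).2 => [p|]; last by rewrite size_cat !size_map !size_iota; lia.
rewrite mem_cat mem_iota => /orP[] /mapP[i]; rewrite mem_iota => /andP[_ /PQ_spec];
  rewrite /visits_of size_s => -[/andP[? ?] _ _ _ _] -> /=; rewrite /P /Q; lia.
Qed.

Lemma schedule_of_visit_times d P Q : visit_times d P Q -> two_visits_yes d.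
Proof.
case=> perm_V deadlines; set n := size d in perm_V deadlines *.
set V := visits n P Q; set L := iota 0 n ++ iota 0 n.
have uniq_V : uniq V by rewrite (perm_uniq perm_V) iota_uniq.
have size_V : size V = 2 * n by rewrite size_cat !size_map size_iota; lia.
have nth_V i : i < n -> nth 0 V i = P i /\ nth 0 V (n + i) = Q i.
  move=> lt_in; rewrite !nth_cat !size_map size_iota lt_in ltnNge leq_addr /= addKn.
  by rewrite !(nth_map 0) ?size_iota // nth_iota.
have nth_L i : i < n -> nth 0 L i = i /\ nth 0 L (n + i) = i.
  by move=> lt_in; rewrite !nth_cat size_iota lt_in ltnNge leq_addr /= addKn nth_iota.
have in_V p : p \in V -> p < 2 * n by rewrite (perm_mem perm_V) mem_iota.
exists [seq nth 0 L (index p V) | p <- iota 0 (2 * n)].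
set s := map _ _.
have perm_sL : perm_eq s L.
  have := perm_map (fun p => nth 0 L (index p V)) perm_V.
  rewrite perm_sym => /perm_trans; apply.
  have -> : [seq nth 0 L (index p V) | p <- V] = L; last exact: perm_refl.
  apply: (@eq_from_nth _ 0); first by rewrite size_map size_V size_cat size_iota; lia.
  by move=> j; rewrite size_map => lt_jV; rewrite (nth_map 0) // index_uniq.
have nth_s p : p < 2 * n -> nth 0 s p = nth 0 L (index p V).
  by move=> lt_p; rewrite (nth_map 0) ?size_iota // nth_iota.
split.
  split; first by rewrite size_map size_iota.
  split; first by rewrite (perm_all _ perm_sL) all_cat andbb; apply/allP => i; rewrite mem_iota.
  move=> i lt_in; rewrite (permP perm_sL) count_cat count_uniq_mem ?iota_uniq //.
  by rewrite mem_iota lt_in.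
move=> i lt_in; exists (P i), (Q i).
have [VP VQ] := nth_V i lt_in; have [LP LQ] := nth_L i lt_in.
have P_in : P i \in V by rewrite -VP mem_nth // size_V; lia.
have Q_in : Q i \in V by rewrite -VQ mem_nth // size_V; lia.
have [lt_PQ lt_Pd le_gap] := deadlines i lt_in.
have index_P : index (P i) V = i by rewrite -VP index_uniq // size_V; lia.
have index_Q : index (Q i) V = n + i by rewrite -VQ index_uniq // size_V; lia.
by rewrite size_map size_iota !nth_s ?in_V // index_P index_Q LP LQ lt_PQ; split.
Qed.

Lemma two_visits_yesP d : two_visits_yes d <-> exists P Q, visit_times d P Q.
Proof.
split => [[s /visit_times_of_schedule] // | [P [Q]]].
exact: schedule_of_visit_times.
Qed.

Section VisitTimes.

Variables (d : seq nat) (P Q : nat -> nat).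
Hypothesis vt : visit_times d P Q.
Let n := size d.

Lemma visit_times_uniq : uniq (map P (iota 0 n)) /\ uniq (map Q (iota 0 n)).
Proof.
by have := perm_uniq vt.1; rewrite /visits -/n iota_uniq cat_uniq => /and3P[-> _ ->].
Qed.

Lemma count_visits_before t : t <= 2 * n ->
  count (fun i => P i < t) (iota 0 n) + count (fun i => Q i < t) (iota 0 n) = t.
Proof.
move=> le_t; have := permP vt.1 (fun p => p < t).
by rewrite count_cat !count_map count_iota_lt -/n (minn_idPl le_t).
Qed.

End VisitTimes.

Lemma count_deadline_le d T : two_visits_yes d ->
  count (fun i => nth 0 d i <= T) (iota 0 (size d)) <= T.
Proof.
case/two_visits_yesP => P [Q vt].
apply: (@count_le_of_inj _ _ P _ 0); first exact: (visit_times_uniq vt).1.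
by move=> i; rewrite mem_iota => /andP[_ /vt.2[_ ? _]] /=; lia.
Qed.

Lemma map_nth_iota_sub (T : Type) (x0 : T) (s : seq T) c :
  [seq nth x0 s (i - c) | i <- iota c (size s)] = s.
Proof.
rewrite (_ : iota c _ = map (addn c) (iota 0 (size s))); last by rewrite -iotaDl addn0.
rewrite -map_comp (eq_map (g := nth x0 s)) ?map_nth_iota0 ?take_size // => i /=.
by rewrite addKn.
Qed.

Section Construction.

Variables (d : seq nat) (k a b x : nat) (S : pred nat).
Let n := size d.
Let w := n + x - a.
Hypothesis deadline_lb : forall i, i < n -> (if i < k then a else b) <= nth 0 d i.
Hypothesis x_le_k : x <= k.
Hypothesis k_le_a : k <= a.
Hypothesis a_le_n : a <= n.
Hypothesis nx_le_b : n + x <= b.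
Hypothesis S_range : forall p, S p -> [&& x + x <= p, w <= p & p < a].
Hypothesis S_window : forall t, count S (iota t w) <= x + x.
Hypothesis S_count : count S (iota 0 a) = k - x.

Let A1 := filter S (iota 0 a).
Let B1 := filter (predC S) (iota (x + x) (n - x)).
Let B2 := filter (predC S) (iota w (n - x)).

(* Nodes i < x are visited at i and x + i, the other a-nodes at the positions
   of S (listed in A1) and a steps later, and the b-nodes take the remaining
   positions of [2x, n + x) (listed in B1) and of [n + x, 2n) (B2 shifted by a)
   in increasing order. *)
Let P i := if i < x then i else if i < k then nth 0 A1 (i - x) else nth 0 B1 (i - k).
Let Q i := if i < x then x + i else a + (if i < k then nth 0 A1 (i - x) else nth 0 B2 (i - k)).

Let aw : a + w = n + x. Proof. rewrite /w; lia. Qed.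

Let A1_first_half : filter S (iota (x + x) (n - x)) = A1.
Proof. by apply: filter_iota_eq => p /S_range; lia. Qed.

Let A1_second_half : filter S (iota w (n - x)) = A1.
Proof. by apply: filter_iota_eq => p /S_range; lia. Qed.

Let size_A1 : size A1 = k - x.
Proof. by rewrite size_filter. Qed.

Let size_B1 : size B1 = n - k.
Proof.
have := count_predC S (iota (x + x) (n - x)).
by rewrite -size_filter A1_first_half size_A1 size_iota size_filter; lia.
Qed.

Let size_B2 : size B2 = n - k.
Proof.
have := count_predC S (iota w (n - x)).
by rewrite -size_filter A1_second_half size_A1 size_iota size_filter; lia.
Qed.

Let split_nodes : iota 0 n = iota 0 x ++ iota x (k - x) ++ iota k (n - k).
Proof.
rewrite {1}(_ : n = x + ((k - x) + (n - k))); last lia.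
by rewrite !iotaD add0n; congr (_ ++ _ ++ iota _ _); lia.
Qed.

Let first_visits : map P (iota 0 n) = iota 0 x ++ A1 ++ B1.
Proof.
rewrite split_nodes !map_cat; congr (_ ++ _ ++ _).
- by rewrite -[RHS]map_id; apply/eq_in_map => i; rewrite mem_iota /P => /andP[_ ->].
- rewrite -[in RHS](map_nth_iota_sub 0 A1 x) size_A1; apply/eq_in_map => i.
  by rewrite mem_iota /P => /andP[? ?]; case: ifP; [lia | case: ifP; lia].
- rewrite -[in RHS](map_nth_iota_sub 0 B1 k) size_B1; apply/eq_in_map => i.
  by rewrite mem_iota /P => /andP[? ?]; case: ifP; [lia | case: ifP; lia].
Qed.

Let second_visits : map Q (iota 0 n) = iota x x ++ map (addn a) (A1 ++ B2).
Proof.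
rewrite split_nodes !map_cat; congr (_ ++ _ ++ _).
- by rewrite -{2}[x]addn0 iotaDl; apply/eq_in_map => i; rewrite mem_iota /Q => /andP[_ ->].
- rewrite -[in RHS](map_nth_iota_sub 0 A1 x) size_A1 -map_comp; apply/eq_in_map => i.
  by rewrite mem_iota /Q /= => /andP[? ?]; case: ifP; [lia | case: ifP; lia].
- rewrite -[in RHS](map_nth_iota_sub 0 B2 k) size_B2 -map_comp; apply/eq_in_map => i.
  by rewrite mem_iota /Q /= => /andP[? ?]; case: ifP; [lia | case: ifP; lia].
Qed.

Let visits_perm : perm_eq (visits n P Q) (iota 0 (2 * n)).
Proof.
have perm_first : perm_eq (A1 ++ B1) (iota (x + x) (n - x)) by rewrite -A1_first_half perm_filterC.
have perm_second : perm_eq (map (addn a) (A1 ++ B2)) (iota (n + x) (n - x)).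
  by rewrite -aw iotaDl perm_map // -A1_second_half perm_filterC.
have -> : iota 0 (2 * n) = iota 0 x ++ iota x x ++ iota (x + x) (n - x) ++ iota (n + x) (n - x).
  rewrite (_ : 2 * n = x + (x + ((n - x) + (n - x)))); last lia.
  by rewrite !iotaD; congr (_ ++ _ ++ _ ++ iota _ _); lia.
rewrite /visits first_visits second_visits -catA perm_cat2l perm_catCA perm_cat2l.
exact: perm_cat.
Qed.

Let count_S_below c : (forall p, S p -> c <= p) -> count S (iota 0 c) = 0.
Proof.
move=> S_ge; apply/eqP; rewrite -leqn0 leqNgt -has_count; apply/hasPn => p.
by rewrite mem_iota => /andP[_ lt_pc]; apply/negP => /S_ge; lia.
Qed.

(* With p the j-th free position of [2x, n + x), the range [2x, p] carries
   p - 2x - j positions of S, so [w, w + p] carries at most p - j of them (at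
   most 2x in [p + 1, p + w]) and at least j + 1 free positions. *)
Let nth_B2_le j : j < n - k -> nth 0 B2 j <= nth 0 B1 j + w.
Proof.
rewrite -size_B1 size_filter => lt_j; set p := nth 0 B1 j.
have [/andP[le_xp _] notSp rank_p] := nth_filter_iota lt_j.
rewrite -/B1 -/p in le_xp notSp rank_p.
suff: nth 0 B2 j < w + p.+1 by lia.
apply: nth_filter_iota_lt.
have S_below_2x : count S (iota 0 (x + x)) = 0 by apply: count_S_below => q /S_range; lia.
have S_below_w : count S (iota 0 w) = 0 by apply: count_S_below => q /S_range; lia.
have S_before_p : count S (iota 0 p.+1) = p - (x + x) - j.
  have := count_predC S (iota (x + x) (p - (x + x))); rewrite rank_p size_iota.
  rewrite (_ : p.+1 = x + x + ((p - (x + x)) + 1)); last lia.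
  rewrite (iotaD 0 (x + x)) (iotaD (0 + (x + x))) !count_cat !add0n S_below_2x (subnKC le_xp).
  by rewrite /= (negbTE notSp); lia.
have S_from_w : count S (iota 0 (w + p.+1)) = count S (iota 0 (p.+1 + w)) by rewrite addnC.
rewrite !iotaD !count_cat S_below_w !add0n S_before_p in S_from_w.
have := count_size (predC S) (iota (x + x) (p - (x + x))); rewrite rank_p size_iota.
have := S_window p.+1; have := count_predC S (iota w p.+1); rewrite size_iota; lia.
Qed.

Let visit_times_construction : visit_times d P Q.
Proof.
split => [|i lt_in]; first exact: visits_perm.
have := deadline_lb lt_in; rewrite /P /Q.
case: (ltnP i x) => [lt_ix | le_xi]; first by rewrite ifT; [split|]; lia.
case: (ltnP i k) => [lt_ik | le_ki] lb.
  have: nth 0 A1 (i - x) \in A1 by rewrite mem_nth // size_A1; lia.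
  by rewrite mem_filter => /andP[/S_range /and3P[_ _ ?] _]; split; lia.
have lt_j : i - k < n - k by lia.
have := nth_B2_le lt_j.
have: nth 0 B1 (i - k) \in B1 by rewrite mem_nth // size_B1.
have: nth 0 B2 (i - k) \in B2 by rewrite mem_nth // size_B2.
by rewrite !mem_filter !mem_iota => /andP[_ /andP[? _]] /andP[_ /andP[_ ?]] ?; split; lia.
Qed.

Lemma feasible_of_late_first_visits : two_visits_yes d.
Proof. exact: schedule_of_visit_times visit_times_construction. Qed.

End Construction.

Lemma sorted_nth_le_count (s : seq nat) c i : sorted leq s -> i < size s ->
  (nth 0 s i <= c) = (i < count (fun v => v <= c) s).
Proof.
elim: s i => [//|v s IH] i sorted_vs; have sorted_s := path_sorted sorted_vs.
have [le_vc | lt_cv] := leqP v c.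
  case: i => [|i] /=; first by rewrite le_vc.
  by rewrite le_vc add1n !ltnS => lt_is; rewrite IH.
have -> : count (fun v => v <= c) (v :: s) = 0.
  rewrite /= leqNgt lt_cv; apply/eqP; rewrite -leqn0 leqNgt -has_count; apply/hasPn => u.
  by move/(allP (order_path_min leq_trans sorted_vs)) => /=; lia.
case: i => [|i] /= => [_ | lt_is]; first by rewrite leqNgt lt_cv.
apply/negbTE; rewrite -ltnNge; apply: leq_trans lt_cv _.
by apply: (sorted_leq_nth leq_trans leqnn 0 sorted_vs 0 i.+1); rewrite ?inE /=; lia.
Qed.

Lemma sorted_nth_between d i : sorted leq d -> i < size d -> head 0 d <= nth 0 d i <= last 0 d.
Proof.
move=> sorted_d lt_i; have mono := sorted_leq_nth leq_trans leqnn 0 sorted_d.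
by rewrite -nth0 -nth_last !mono ?inE //=; lia.
Qed.

Lemma two_valued_shape d : sorted leq d -> size (undup d) <= 2 ->
  forall i, i < size d -> nth 0 d i = if i < count_mem (head 0 d) d then head 0 d else last 0 d.
Proof.
move=> sorted_d two_values i lt_i; set a := head 0 d; set b := last 0 d.
have in_range j : j < size d -> a <= nth 0 d j <= b by apply: sorted_nth_between.
have -> : count_mem a d = count (fun v => v <= a) d.
  apply: eq_in_count => _ /(nthP 0)[j lt_j <-] /=.
  by rewrite eq_sym eqn_leq; have /andP[-> _] := in_range j lt_j.
rewrite -sorted_nth_le_count //; have /andP[le_a le_b] := in_range i lt_i.
case: leqP => [le_da | lt_ad]; first by apply/eqP; rewrite eqn_leq le_da.
have d_nonempty : 0 < size d by lia.
have ab_in : {subset [:: a; b] <= undup d}.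
  by move=> v; rewrite !inE mem_undup /a /b -nth0 -nth_last => /orP[] /eqP ->;
    apply: mem_nth; rewrite ?ltn_predL.
have uniq_ab : uniq [:: a; b] by rewrite /= inE andbT; apply/eqP; lia.
have [_ /(_ (nth 0 d i))] := uniq_min_size uniq_ab ab_in two_values.
by rewrite mem_undup mem_nth // !inE => /orP[] /eqP //; lia.
Qed.

Lemma feasible_of_pattern_count d k a b x :
  (forall i, i < size d -> (if i < k then a else b) <= nth 0 d i) ->
  x <= k -> k <= a -> a < size d -> x <= size d - a -> size d + x <= b ->
  k - x <= count (pattern (size d + x - a) (x + x)) (iota 0 a) -> two_visits_yes d.
Proof.
set n := size d; set w := n + x - a => deadline_lb x_le_k k_le_a a_lt_n x_le_na nx_le_b.
case/exists_count_prefix => T le_Ta count_T.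
pose S p := (p < T) && pattern w (x + x) p.
apply: (@feasible_of_late_first_visits _ k a b x S) => //; first lia.
- by move=> p /and3P[lt_pT le_wp _]; rewrite /w; lia.
- move=> t; apply: leq_trans (_ : count (fun p => p %% w < x + x) (iota t w) <= _).
    by apply: sub_count => p /and3P[].
  by rewrite count_mod_window ?geq_minl // /w; lia.
- rewrite -count_T -(subnKC le_Ta) iotaD count_cat.
  rewrite (@eq_in_count _ S pred0 (iota (0 + T) _)) ?count_pred0 ?addn0.
    by apply: eq_in_count => p; rewrite mem_iota /S => /andP[_ ->].
  by move=> p; rewrite mem_iota /S => /andP[le_Tp _]; rewrite ltnNge le_Tp.
Qed.

Section TwoValued.

Variables (d : seq nat) (k a b : nat).
Let n := size d.
Let x := b - n.
Let w := b - a.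
Hypothesis d_shape : forall i, i < n -> nth 0 d i = if i < k then a else b.
Hypothesis k_le_a : k <= a.
Hypothesis a_lt_n : a < n.
Hypothesis n_le_b : n <= b.

Let deadline_le_b i : i < n -> nth 0 d i <= b.
Proof. by move=> lt_in; rewrite d_shape //; case: ifP; lia. Qed.

Section LateVisits.

Variables (P Q : nat -> nat).
Hypothesis x_lt_k : x < k.
Hypothesis vt : visit_times d P Q.

Let late_a i := (i < k) && (b <= Q i).

Let count_early : count (fun i => Q i < b) (iota 0 n) = x.
Proof.
have := count_visits_before vt (_ : b <= 2 * n); rewrite -/n => /(_ ltac:(lia)).
rewrite (@eq_in_count _ _ predT) ?count_predT ?size_iota; first lia.
move=> i; rewrite mem_iota => /andP[_ lt_in]; have [_ ? _] := vt.2 i lt_in.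
by have := deadline_le_b lt_in; rewrite /=; lia.
Qed.

Let late_a_first_visit i : i < n -> late_a i -> w <= P i < a.
Proof.
move=> lt_in /andP[lt_ik le_bQ]; have [_] := vt.2 i lt_in.
by rewrite d_shape // lt_ik; lia.
Qed.

Let late_a_window t : t <= b ->
  count (fun i => late_a i && (t <= P i < t + w)) (iota 0 n) <= x + x.
Proof.
move=> le_tb.
(* The second visits of all these nodes are distinct positions of [b, b + t). *)
set late_before := count (fun i => (b <= Q i) && (P i < t)) (iota 0 n).
have late_in_window : late_before + count (fun i => late_a i && (t <= P i < t + w)) (iota 0 n) <= t.
  rewrite -count_predU_disjoint => [|i /andP[_ ?]]; last by apply/negP => /andP[_ /andP[? _]]; lia.
  apply: (@count_le_of_inj _ _ Q _ b); first exact: (visit_times_uniq vt).2.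
  rewrite -/n => i; rewrite mem_iota => /andP[_ lt_in] /=.
  have [_ _ gap] := vt.2 i lt_in; have le_db := deadline_le_b lt_in.
  case/orP => [/andP[? ?] | /andP[/andP[lt_ik ?] ?]]; first lia.
  by move: gap; rewrite d_shape // lt_ik; lia.
have first_before : count (fun i => P i < t) (iota 0 n) <= late_before + x.
  rewrite -count_early; apply: leq_trans (count_predU_le _ _ _).
  by apply: sub_count => i /= ->; rewrite andbT; case: leqP.
have second_before : count (fun i => Q i < t) (iota 0 n) <= x.
  by rewrite -count_early; apply: sub_count => i /=; lia.
have := count_visits_before vt (_ : t <= 2 * n); rewrite -/n => /(_ ltac:(lia)); lia.
Qed.

Lemma pattern_count_of_visit_times : k - x <= count (pattern w (x + x)) (iota 0 a).
Proof.
have k_late_a : k - x <= count late_a (iota 0 n).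
  have := count_predU_le late_a (fun i => Q i < b) (iota 0 n).
  have : count (fun i => i < k) (iota 0 n) <= count (predU late_a (fun i => Q i < b)) (iota 0 n).
    by apply: sub_count => i /= lt_ik; rewrite /late_a lt_ik /=; case: leqP.
  by rewrite count_early count_iota_lt; lia.
set U := map P (filter late_a (iota 0 n)).
have uniq_U : uniq U.
  by apply: subseq_uniq (visit_times_uniq vt).1; apply/map_subseq/filter_subseq.
have count_U lo len :
    count (mem U) (iota lo len) = count (fun i => late_a i && (lo <= P i < lo + len)) (iota 0 n).
  by rewrite count_mem_sym ?iota_uniq // count_map count_filter; apply: eq_count => i /=;
    rewrite mem_iota andbC.
apply: leq_trans k_late_a _.
rewrite count_pattern -size_filter -(size_map P) -/U.
have -> : size U = count (mem U) (iota w (a - w)).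
  rewrite count_U size_map size_filter; apply: eq_in_count => i.
  rewrite mem_iota => /andP[_ lt_in] /=; case late_a_i: (late_a i) => //=.
  by have := late_a_first_visit lt_in late_a_i; lia.
apply: count_le_mod_count; first lia.
by move=> t le_t; rewrite count_U; apply: late_a_window; lia.
Qed.

End LateVisits.

Lemma two_valued_criterionP :
  reflect (two_visits_yes d) (k - x <= count (pattern w (x + x)) (iota 0 a)).
Proof.
have deadline_lb i : i < n -> (if i < k then a else b) <= nth 0 d i by move=> /d_shape ->.
have [le_kx | lt_xk] := leqP k x.
  rewrite (_ : k - x = 0); last lia.
  apply: ReflectT; apply: (@feasible_of_late_first_visits d k a b k pred0) => //; try lia.
  - by move=> t; rewrite count_pred0.
  - by rewrite count_pred0 subnn.
apply: (iffP idP) => [criterion | /two_visits_yesP[P [Q vt]]]; last first.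
  exact: pattern_count_of_visit_times vt.
have [le_x_na | lt_na_x] := leqP x (n - a).
  apply: (@feasible_of_pattern_count d k a b x) => //; try lia.
  by rewrite (_ : n + x - a = w) // /x /w; lia.
(* For x' = n - a the pattern is just [2x', a), and k - x <= a - w implies k - x' <= a - 2x'. *)
apply: (@feasible_of_pattern_count d k a b (n - a)) => //; try lia.
set w' := n + (n - a) - a.
have -> : count (pattern w' (n - a + (n - a))) (iota 0 a) = a - w'.
  rewrite count_pattern (@eq_in_count _ _ predT) ?count_predT ?size_iota // => p _.
  by rewrite /= (_ : n - a + (n - a) = w') ?ltn_pmod // /w'; lia.
move: criterion; rewrite count_pattern.
have := count_size (fun p => p %% w < x + x) (iota 0 (a - w)).
rewrite size_iota /w' /w /x; lia.
Qed.

End TwoValued.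



Definition decide (d : seq nat) : bool :=
  let n := size d in let a := head 0 d in let b := last 0 d in
  let k := count_mem a d in let x := b - n in
  (n <= a) || [&& k <= a, n <= b & k - x <= count (pattern (b - a) (x + x)) (iota 0 a)].

Lemma decideP d : two_visits_instance d -> size (undup d) <= 2 ->
  reflect (two_visits_yes d) (decide d).
Proof.
case=> sorted_d _ two_values; rewrite /decide.
set n := size d; set a := head 0 d; set b := last 0 d; set k := count_mem a d.
have between i : i < n -> a <= nth 0 d i <= b by apply: sorted_nth_between.
have [le_na | lt_an] /= := leqP n a.
  apply: ReflectT; apply: (@feasible_of_late_first_visits d n n (n + n) n pred0) => //.
  - by move=> i lt_in; rewrite lt_in; have := between i lt_in; lia.
  - by move=> t; rewrite count_pred0.
  - by rewrite count_pred0 subnn.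
have shape := two_valued_shape sorted_d two_values; rewrite -/n -/a -/b -/k in shape.
have [le_ka | lt_ak] /= := leqP k a; last first.
  apply: ReflectF => /(count_deadline_le a); apply/negP; rewrite -ltnNge.
  have k_le_n : k <= n by rewrite /k count_size.
  apply: leq_trans lt_ak _; rewrite -{1}(minn_idPl k_le_n) -count_iota_lt.
  by apply: sub_in_count => i; rewrite mem_iota => /andP[_ /shape ->] /= ->.
have [le_nb | lt_bn] /= := leqP n b; last first.
  apply: ReflectF => /(count_deadline_le b); apply/negP; rewrite -ltnNge.
  rewrite (@eq_in_count _ _ predT) ?count_predT ?size_iota // => i.
  by rewrite mem_iota => /andP[_ /between /andP[_ ->]].
exact: two_valued_criterionP.
Qed.

Lemma neq0_nat_of_bool (b : bool) : (nat_of_bool b != 0) = b.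
Proof. by case: b. Qed.

Definition runs d c st (Post : state -> Prop) (B : nat) : Prop :=
  exists st' t, [/\ exec d c st st' t, t <= B & Post st'].

Lemma runs_le d c st P B B' : B <= B' -> runs d c st P B -> runs d c st P B'.
Proof.
by move=> le_B [s [t [ex le_t Ps]]]; exists s, t; split => //; apply: leq_trans le_B.
Qed.

Lemma runs_post d c st (P P' : state -> Prop) B :
  (forall s, P s -> P' s) -> runs d c st P B -> runs d c st P' B.
Proof. by move=> PP' [s [t [ex le_t Ps]]]; exists s, t; split => //; apply: PP'. Qed.

Lemma runs_skip d st (P : state -> Prop) : P st -> runs d CSkip st P 1.
Proof. by move=> Pst; exists st, 1; split => //; constructor. Qed.

Lemma runs_assign d r e st (P : state -> Prop) :
  P (upd st r (eval d st e)) -> runs d (CAssign r e) st P 1.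
Proof. by move=> Pst; exists (upd st r (eval d st e)), 1; split => //; constructor. Qed.

Lemma runs_seq d c1 c2 st P1 P B1 B2 :
  runs d c1 st P1 B1 -> (forall s, P1 s -> runs d c2 s P B2) ->
  runs d (CSeq c1 c2) st P (B1 + B2).
Proof.
move=> [s1 [t1 [ex1 le_t1 P1s1]]] /(_ s1 P1s1) [s2 [t2 [ex2 le_t2 Ps2]]].
by exists s2, (t1 + t2); split; [exact: XSeq ex1 ex2 | exact: leq_add |].
Qed.

Lemma runs_assign_seq d r e c st P B :
  runs d c (upd st r (eval d st e)) P B -> runs d (CSeq (CAssign r e) c) st P (1 + B).
Proof. by move=> run_c; apply: runs_seq (runs_assign (P := eq _) erefl) _ => _ <-. Qed.

Lemma runs_if d e c1 c2 st P B :
  runs d (if eval d st e != 0 then c1 else c2) st P B -> runs d (CIf e c1 c2) st P B.+1.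
Proof.
case: eqP => [e0 | /eqP e_neq0] [s [t [ex le_t Ps]]]; exists s, t.+1; split => //.
  exact: XIfF.
exact: XIfT.
Qed.

Lemma runs_while d e c (Inv : nat -> state -> Prop) (P : state -> Prop) N B st :
  (forall j s, j < N -> Inv j s -> eval d s e != 0 /\ runs d c s (Inv j.+1) B) ->
  (forall s, Inv N s -> eval d s e = 0 /\ P s) ->
  Inv 0 st -> runs d (CWhile e c) st P (N * B.+1).+1.
Proof.
move=> step stop.
suff run_from i s : i <= N -> Inv (N - i) s -> runs d (CWhile e c) s P (i * B.+1).+1.
  by move=> Inv0; apply: run_from (leqnn N) _; rewrite subnn.
elim: i s => [|i IH] s le_iN.
  by rewrite subn0 => /stop[e0 Ps]; exists s, 1; split => //; constructor.
move=> Inv_s; have lt_N : N - i.+1 < N by lia.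
have [e_neq0 [s1 [t1 [ex1 le_t1 Inv_s1]]]] := step _ _ lt_N Inv_s.
rewrite (_ : (N - i.+1).+1 = N - i) in Inv_s1; last lia.
have [s2 [t2 [ex2 le_t2 Ps2]]] := IH s1 (ltnW le_iN) Inv_s1.
exists s2, (t1 + t2).+1; split; [exact: XWhileT ex1 ex2 | | exact: Ps2].
by rewrite mulSn; lia.
Qed.

Lemma updE (st : state) r v r' : upd st r v r' = if r' == r then v else st r'.
Proof. by []. Qed.

Lemma upd_frame (ws : seq nat) (st s : state) r v :
  r \in ws -> (forall r', r' \notin ws -> s r' = st r') ->
  forall r', r' \notin ws -> upd s r v r' = st r'.
Proof.
move=> r_in frame r' r'_notin; rewrite /upd; case: eqP => [eq_r | _]; last exact: frame.
by move: r'_notin; rewrite eq_r r_in.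
Qed.

(* Registers: 1 = n, 2 = a = d_0, 3 = b = d_(n-1), 4 = k, 5 = scan index,
   6 = x, 7 = w, 8 = 2x, 9 = position p, 10 = p mod w, 11 = number of pattern
   positions below p; the answer is written to register 0. *)
Definition count_head_loop : cmd :=
  CWhile (ELt (EReg 5) (EReg 1))
    (CSeq (CIf (EEq (EInput (EReg 5)) (EReg 2)) (CAssign 4 (EAdd (EReg 4) (EConst 1))) CSkip)
          (CAssign 5 (EAdd (EReg 5) (EConst 1)))).

Lemma count_head_loop_runs d st : st 1 = size d -> st 4 = 0 -> st 5 = 0 ->
  runs d count_head_loop st
    (fun s => s 4 = count_mem (st 2) d /\ forall r, r \notin [:: 4; 5] -> s r = st r)
    (size d * 4).+1.
Proof.
move=> st1 st4 st5.
pose counted j := count (fun i => nth 0 d i == st 2) (iota 0 j).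
pose frame s := forall r, r \notin [:: 4; 5] -> s r = st r.
pose Inv j s := [/\ s 5 = j, s 4 = counted j & frame s].
apply: (@runs_while _ _ _ Inv _ _ (2 + 1)); last by split.
- move=> j s lt_jn [s5 s4 frame_s]; split; first by rewrite /= neq0_nat_of_bool s5 frame_s // st1.
  have counted_succ : counted j.+1 = s 4 + (nth 0 d j == st 2).
    by rewrite /counted -[j.+1]addn1 iotaD count_cat -/(counted j) -s4 /= addn0.
  apply: (@runs_seq _ _ _ _ (fun s' => [/\ s' 5 = j, s' 4 = counted j.+1 & frame s'])).
    rewrite counted_succ; apply: runs_if; rewrite /= neq0_nat_of_bool s5 (frame_s 2) //.
    by case: eqP => _; [apply: runs_assign | apply: runs_skip];
      split; rewrite ?updE /= ?s5 ?addn0 //; apply: upd_frame.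
  move=> s' [s'5 s'4 frame_s']; apply: runs_assign.
  by split; rewrite ?updE /= ?s'5 ?s'4 ?addn1 //; apply: upd_frame.
- move=> s [s5 s4 frame_s]; split; first by rewrite /= s5 frame_s // st1 ltnn.
  by split=> //; rewrite s4 /counted (count_nth_iota (pred1 (st 2))).
Qed.

Lemma modnS_wrap p w : p.+1 %% w = if (p %% w).+1 == w then 0 else (p %% w).+1.
Proof.
have [-> | w_gt0] := posnP w; first by rewrite !modn0.
have := ltn_pmod p w_gt0; rewrite -[p.+1]addn1 -modnDml addn1.
by case: eqP => [-> _ | ne lt_pw]; [exact: modnn | rewrite modn_small //; lia].
Qed.

Definition pattern_loop : cmd :=
  CWhile (ELt (EReg 9) (EReg 2))
    (CSeq (CIf (ELt (EReg 7) (EAdd (EReg 9) (EConst 1)))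
             (CIf (ELt (EReg 10) (EReg 8)) (CAssign 11 (EAdd (EReg 11) (EConst 1))) CSkip)
             CSkip)
    (CSeq (CAssign 9 (EAdd (EReg 9) (EConst 1)))
    (CSeq (CAssign 10 (EAdd (EReg 10) (EConst 1)))
          (CIf (EEq (EReg 10) (EReg 7)) (CAssign 10 (EConst 0)) CSkip)))).

Lemma pattern_loop_runs d st : st 9 = 0 -> st 10 = 0 -> st 11 = 0 ->
  runs d pattern_loop st
    (fun s => s 11 = count (pattern (st 7) (st 8)) (iota 0 (st 2)) /\
              forall r, r \notin [:: 9; 10; 11] -> s r = st r)
    (st 2 * 8).+1.
Proof.
move=> st9 st10 st11; set w := st 7; set y := st 8.
pose counted p := count (pattern w y) (iota 0 p).
pose frame s := forall r, r \notin [:: 9; 10; 11] -> s r = st r.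
pose Inv p s := [/\ s 9 = p, s 10 = p %% w, s 11 = counted p & frame s].
apply: (@runs_while _ _ _ Inv _ _ (3 + (1 + (1 + 2)))); last by split; rewrite ?st9 ?st10 ?mod0n.
- move=> p s lt_pa [s9 s10 s11 frame_s]; split; first by rewrite /= neq0_nat_of_bool s9 frame_s.
  have counted_succ : counted p.+1 = s 11 + pattern w y p.
    by rewrite /counted -[p.+1]addn1 iotaD count_cat -/(counted p) -s11 /= addn0.
  apply: (@runs_seq _ _ _ _
    (fun s' => [/\ s' 9 = p, s' 10 = p %% w, s' 11 = counted p.+1 & frame s'])).
    rewrite counted_succ /pattern; apply: runs_if.
    rewrite /= neq0_nat_of_bool s9 (frame_s 7) // -/w addn1 ltnS.
    case: (leqP w p) => _ /=; last first.
      by apply: (@runs_le _ _ _ _ 1) => //; apply: runs_skip; rewrite addn0.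
    apply: runs_if; rewrite /= neq0_nat_of_bool s10 (frame_s 8) // -/y.
    by case: (ltnP (p %% w) y) => _; [apply: runs_assign | apply: runs_skip];
      split; rewrite ?updE /= ?s9 ?s10 ?addn1 ?addn0 //; apply: upd_frame.
  move=> s' [s'9 s'10 s'11 frame_s']; do 2 apply: runs_assign_seq; apply: runs_if.
  rewrite /= !updE /= neq0_nat_of_bool s'10 (frame_s' 7) // -/w addn1.
  have [wrap | nowrap] := eqVneq (p %% w).+1 w; [apply: runs_assign | apply: runs_skip];
    (split; last by do ?apply: upd_frame);
    rewrite !updE /= ?s'9 ?s'10 ?s'11 ?addn1 // modnS_wrap ?wrap ?eqxx ?(negbTE nowrap) //.
- move=> s [s9 s10 s11 frame_s]; split; first by rewrite /= s9 frame_s // ltnn.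
  by split.
Qed.

Definition decide_tail : cmd :=
  CIf (ELt (EReg 2) (EReg 4)) (CAssign 0 (EConst 0))
 (CIf (ELt (EReg 3) (EReg 1)) (CAssign 0 (EConst 0))
      (CAssign 0 (ELt (ESub (EReg 4) (EReg 6)) (EAdd (EReg 11) (EConst 1))))).

Lemma decide_tail_runs d s :
  runs d decide_tail s (fun s' => (s' 0 != 0) = [&& s 4 <= s 2, s 1 <= s 3 & s 4 - s 6 <= s 11]) 3.
Proof.
apply: runs_if; rewrite /= neq0_nat_of_bool.
case: (ltnP (s 2) (s 4)) => _ /=.
  by apply: (@runs_le _ _ _ _ 1) => //; apply: runs_assign; rewrite updE.
apply: runs_if; rewrite /= neq0_nat_of_bool.
case: (ltnP (s 3) (s 1)) => _; apply: runs_assign; rewrite updE //=.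
by rewrite neq0_nat_of_bool addn1 ltnS.
Qed.

Definition decide_prog : cmd :=
  CSeq (CAssign 1 ELen)
 (CSeq (CAssign 2 (EInput (EConst 0)))
 (CSeq (CAssign 3 (EInput (ESub ELen (EConst 1))))
 (CSeq count_head_loop
 (CIf (ELt (EReg 1) (EAdd (EReg 2) (EConst 1))) (CAssign 0 (EConst 1))
 (CSeq (CAssign 6 (ESub (EReg 3) (EReg 1)))
 (CSeq (CAssign 7 (ESub (EReg 3) (EReg 2)))
 (CSeq (CAssign 8 (EAdd (EReg 6) (EReg 6)))
 (CSeq pattern_loop decide_tail)))))))).

Lemma decide_prog_runs d :
  runs d decide_prog init_state (fun s => (s 0 != 0) = decide d) (12 * (size d).+1).
Proof.
rewrite /decide; set n := size d; set a := head 0 d; set b := last 0 d; set k := count_mem a d.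
apply: (@runs_le _ _ _ _ (1 + (1 + (1 + ((n * 4).+1 + (1 + (1 + (1 + ((n * 8).+1 + 3)))).+1)))));
  first lia.
do 3 apply: runs_assign_seq; set st := upd _ 3 _.
have st_n : st 1 = n by [].
have st_a : st 2 = a by [].
have st_b : st 3 = b by rewrite /st updE /= subn1 nth_last.
apply: (runs_seq (@count_head_loop_runs d st st_n erefl erefl)) => s [s_k frame].
rewrite st_a -/k in s_k.
apply: runs_if; rewrite /= neq0_nat_of_bool !frame // st_n st_a addn1 ltnS.
case: leqP => [le_na | lt_an] /=.
  by apply: (@runs_le _ _ _ _ 1) => //; apply: runs_assign; rewrite updE.
do 3 apply: runs_assign_seq; set s' := upd _ 8 _.
apply: (@runs_le _ _ _ _ ((a * 8).+1 + 3)); first lia.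
have s'_reg r : r \in [:: 2; 9; 10; 11] -> s' r = st r.
  by rewrite !inE => /or4P[] /eqP ->; rewrite /s' !updE /= frame.
have := @pattern_loop_runs d s' (s'_reg 9 isT) (s'_reg 10 isT) (s'_reg 11 isT).
rewrite (s'_reg 2 isT) st_a => /runs_seq; apply => s'' [s''_count frame'].
have [s'_w s'_y] : s' 7 = b - a /\ s' 8 = b - n + (b - n).
  by rewrite /s' /upd /= !frame // st_n st_a st_b.
have [s''_n s''_a s''_b s''_k s''_x] :
    [/\ s'' 1 = n, s'' 2 = a, s'' 3 = b, s'' 4 = k & s'' 6 = b - n].
  by rewrite !frame' // /s' /upd /= s_k !frame // st_n st_a st_b.
apply: runs_post (decide_tail_runs d s'') => s0 ->.
by rewrite s''_n s''_a s''_b s''_k s''_x s''_count s'_w s'_y.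
Qed.

Theorem theorem4 :
  exists (P : cmd) (c : nat),
    forall d : seq nat,
      two_visits_instance d ->
      size (undup d) <= 2 ->
      decides_within P c d (two_visits_yes d).
Proof.
exists decide_prog, 12 => d instance two_values.
have [s [t [exec_t le_t answer]]] := decide_prog_runs d.
exists s, t; split => //.
by rewrite answer; apply: iff_sym; apply: rwP; apply: decideP.
Qed.
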